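(* Let $A,B$ be rings with local units and $f:A\to B$ a ring homomorphism. The following are equivalent: (1) $f$ is non-degenerate; (2) $f$ extends to a strictly continuous unital ring homomorphism $\varphi:M(A)\to M(B)$ (i.e. $\varphi\circ\mu_A=\mu_B\circ f$). Furthermore, in this case there exists a unique ring homomorphism $M(A)\to M(B)$ extending $f$.
   Context: Rings are associative, not necessarily unital. A ring $A$ has local units if for every $a\in A$ there exist $e,e'\in A$ with $ae=e'a=a$. The multiplier ring $M(A)$ of such $A$ consists of pairs $m=(L,R)$ of additive maps $A\to A$, written $L(a)=ma$, $R(a)=am$, satisfying $m(ab)=(ma)b$, $(ab)m=a(bm)$ and $a(mb)=(am)b$ for all $a,b\in A$; addition is pointwise and multiplication is composition of these actions, making $M(A)$ a unital ring. The map $\mu_A:A\to M(A)$ sending $\xi$ to left and right multiplication by $\xi$ is an injective ring homomorphism identifying $A$ with an ideal of $M(A)$. The strict topology on $M(A)$ is the weakest topology making the maps $m\mapsto ma$ and $m\mapsto am$ continuous for each $a\in A$, where $A$ carries the discrete topology. For subrings $X,Y$ of a ring, $XY$ denotes the additive subgroup generated by products $xy$. A ring homomorphism $f:A\to B$ between rings with local units is non-degenerate if $f(A)B=Bf(A)=B$. *)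

From HB Require Import structures.
From mathcomp Require Import all_boot all_order all_algebra.
Set Implicit Arguments. Unset Strict Implicit. Unset Printing Implicit Defensive.
Import GRing.Theory.
Local Open Scope ring_scope.

Record nuRing := NuRing {
  nu_car :> zmodType;
  nmul : nu_car -> nu_car -> nu_car;
  nmulA : forall x y z, nmul x (nmul y z) = nmul (nmul x y) z;
  nmulDl : forall x y z, nmul (x + y) z = nmul x z + nmul y z;
  nmulDr : forall x y z, nmul x (y + z) = nmul x y + nmul x z
}.

Notation "x ** y" := (nmul x y) (at level 40, left associativity).

Definition has_local_units (A : nuRing) : Prop :=
  forall a : A, exists e e' : A, a ** e = a /\ e' ** a = a.

Definition nu_rhom (A B : nuRing) (f : A -> B) : Prop :=
  (forall x y, f (x + y) = f x + f y) /\ (forall x y, f (x ** y) = f x ** f y).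

(* Non-degeneracy: f(A)B = B f(A) = B, where XY is the additive subgroup
   generated by the products; it consists of the finite sums of products. *)
Definition nondegenerate_hom (A B : nuRing) (f : A -> B) : Prop :=
  (forall b : B, exists s : seq (A * B), b = \sum_(p <- s) (f p.1 ** p.2)) /\
  (forall b : B, exists s : seq (B * A), b = \sum_(p <- s) (p.1 ** f p.2)).

(* Multipliers: pairs (L,R) of additive maps with L a = m a, R a = a m. *)
Record multiplier (A : nuRing) := Multiplier {
  mL : A -> A;
  mR : A -> A;
  mL_add : forall x y, mL (x + y) = mL x + mL y;
  mR_add : forall x y, mR (x + y) = mR x + mR y;
  mL_mul : forall a b, mL (a ** b) = mL a ** b;
  mR_mul : forall a b, mR (a ** b) = a ** mR b;
  mLR : forall a b, a ** mL b = mR a ** b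
}.

Section MultOps.
Variable A : nuRing.

Definition madd (m n : multiplier A) : multiplier A.
Proof.
refine (@Multiplier A (fun a => mL m a + mL n a) (fun a => mR m a + mR n a)
  _ _ _ _ _).
- by move=> x y; rewrite !mL_add addrACA.
- by move=> x y; rewrite !mR_add addrACA.
- by move=> a b; rewrite nmulDl !mL_mul.
- by move=> a b; rewrite nmulDr !mR_mul.
- by move=> a b; rewrite nmulDr nmulDl !mLR.
Defined.

Definition mmul (m n : multiplier A) : multiplier A.
Proof.
refine (@Multiplier A (fun a => mL m (mL n a)) (fun a => mR n (mR m a))
  _ _ _ _ _).
- by move=> x y; rewrite !mL_add.
- by move=> x y; rewrite !mR_add.
- by move=> a b; rewrite !mL_mul.
- by move=> a b; rewrite !mR_mul.
- by move=> a b; rewrite mLR mLR.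
Defined.

Definition mone : multiplier A.
Proof.
refine (@Multiplier A (fun a => a) (fun a => a) _ _ _ _ _) => //.
Defined.

Definition mu (xi : A) : multiplier A.
Proof.
refine (@Multiplier A (fun a => xi ** a) (fun a => a ** xi) _ _ _ _ _).
- by move=> x y; rewrite nmulDr.
- by move=> x y; rewrite nmulDl.
- by move=> a b; rewrite nmulA.
- by move=> a b; rewrite nmulA.
- by move=> a b; rewrite nmulA.
Defined.

End MultOps.

Definition mult_rhom (A B : nuRing) (phi : multiplier A -> multiplier B) : Prop :=
  (forall m n, phi (madd m n) = madd (phi m) (phi n)) /\
  (forall m n, phi (mmul m n) = mmul (phi m) (phi n)).

Definition mult_unital (A B : nuRing) (phi : multiplier A -> multiplier B) : Prop :=
  phi (mone A) = mone B.

(* Strict continuity, A and B discrete.  The strict topology on M(A) has as a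
   neighbourhood base at m the sets
     { m' | m' a = m a and a m' = a m for all a in as },  as a finite list.
   Continuity of phi at every point, stated via these neighbourhood bases. *)
Definition strictly_continuous (A B : nuRing)
    (phi : multiplier A -> multiplier B) : Prop :=
  forall (m : multiplier A) (bs : seq B),
    exists as_ : seq A, forall m' : multiplier A,
      (forall a, a \in as_ -> mL m' a = mL m a /\ mR m' a = mR m a) ->
      forall b, b \in bs -> mL (phi m') b = mL (phi m) b /\
                            mR (phi m') b = mR (phi m) b.

Definition mult_extends (A B : nuRing) (f : A -> B)
    (phi : multiplier A -> multiplier B) : Prop :=
  forall a : A, phi (mu a) = mu (f a).

(* A multiplier m of A acts on B = f(A)B by  m (sum_i f(a_i) b_i) := sum_i f(m a_i) b_i.
   This is well defined: B = B f(A) and, B having local units, left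
   multiplication by the elements c f(a) separates points of B, while
   c f(a) f(m a_i) b_i = c f(a m) f(a_i) b_i only involves sum_i f(a_i) b_i.
   Together with the symmetric right action this gives the extension, which is
   strictly continuous because its value at b only involves m at the finitely
   many a_i of one fixed representation of b.
   Conversely, applying continuity of an extension phi at 1 to a single b gives
   finitely many elements of A; a common two-sided unit u for them makes
   mu(u) close to 1, so mu(f u) = phi(mu u) acts trivially on b, i.e.
   b = f(u) b = b f(u).  Uniqueness holds since phi(m)(f(a) b) = f(m a) b for
   every multiplicative extension phi, and these elements span B. *)
From mathcomp Require Import all_boot all_order all_algebra.
From Stdlib Require Import ProofIrrelevance FunctionalExtensionality ClassicalEpsilon.
Set Implicit Arguments. Unset Strict Implicit. Unset Printing Implicit Defensive.
Import GRing.Theory.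
Local Open Scope ring_scope.

Lemma additive_map0 (V W : zmodType) (g : V -> W) :
  {morph g : x y / x + y} -> g 0 = 0.
Proof. by move=> gD; apply: (addrI (g 0)); rewrite -gD !addr0. Qed.

Section NuRingTheory.
Variable A : nuRing.
Implicit Types x y z : A.

Lemma nmulr0 x : x ** 0 = 0.
Proof. exact: (additive_map0 (nmulDr x)). Qed.

Lemma nmul0r x : 0 ** x = 0.
Proof. exact: (additive_map0 (fun y z => nmulDl y z x)). Qed.

Lemma nmulrN x y : x ** (- y) = - (x ** y).
Proof. by apply/eqP; rewrite -subr_eq0 opprK -nmulDr addNr nmulr0. Qed.

Lemma nmulNr x y : (- x) ** y = - (x ** y).
Proof. by apply/eqP; rewrite -subr_eq0 opprK -nmulDl addNr nmul0r. Qed.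

Lemma nmulrBr x y z : x ** (y - z) = x ** y - x ** z.
Proof. by rewrite nmulDr nmulrN. Qed.

Lemma nmulrBl x y z : (x - y) ** z = x ** z - y ** z.
Proof. by rewrite nmulDl nmulNr. Qed.

Lemma nmulr_sumr (I : Type) x (s : seq I) (F : I -> A) :
  x ** (\sum_(i <- s) F i) = \sum_(i <- s) x ** F i.
Proof. exact: (big_morph _ (nmulDr x) (nmulr0 x)). Qed.

Lemma nmulr_suml (I : Type) x (s : seq I) (F : I -> A) :
  (\sum_(i <- s) F i) ** x = \sum_(i <- s) F i ** x.
Proof. exact: (big_morph _ (fun y z => nmulDl y z x) (nmul0r x)). Qed.

(* The circle operation: 1 - circle e e' = (1 - e)(1 - e') in the unitization. *)
Definition circle x y := x + y - x ** y.

Lemma nmulr_circle x e e' : x ** circle e e' = x ** e + (x - x ** e) ** e'.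
Proof. by rewrite nmulrBr nmulDr nmulrBl nmulA addrA. Qed.

Lemma nmul_circlel x e e' : circle e' e ** x = e ** x + e' ** (x - e ** x).
Proof. by rewrite nmulrBl nmulDl nmulrBr nmulA (addrC (e' ** x)) addrA. Qed.

Hypothesis unitsA : has_local_units A.

Lemma local_units_eq_lmul x y : (forall c, c ** x = c ** y) -> x = y.
Proof.
move=> eq_cxy; apply/eqP; rewrite -subr_eq0; apply/eqP.
have [_ [e' [_ <-]]] := unitsA (x - y).
by rewrite nmulrBr eq_cxy subrr.
Qed.

Lemma local_units_eq_rmul x y : (forall c, x ** c = y ** c) -> x = y.
Proof.
move=> eq_xyc; apply/eqP; rewrite -subr_eq0; apply/eqP.
have [e [_ [<- _]]] := unitsA (x - y).
by rewrite nmulrBl eq_xyc subrr.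
Qed.

Lemma local_runit_seq (l : seq A) : exists e, forall a, a \in l -> a ** e = a.
Proof.
elim: l => [|a l [e unit_e]]; first by exists 0.
have [e' [_ [unit_e' _]]] := unitsA (a - a ** e).
exists (circle e e') => x; rewrite in_cons nmulr_circle => /predU1P[-> | /unit_e ->].
  by rewrite unit_e' addrC subrK.
by rewrite subrr nmul0r addr0.
Qed.

Lemma local_lunit_seq (l : seq A) : exists e, forall a, a \in l -> e ** a = a.
Proof.
elim: l => [|a l [e unit_e]]; first by exists 0.
have [_ [e' [_ unit_e']]] := unitsA (a - e ** a).
exists (circle e' e) => x; rewrite in_cons nmul_circlel => /predU1P[-> | /unit_e ->].
  by rewrite unit_e' addrC subrK.
by rewrite subrr nmulr0 addr0.
Qed.

Lemma local_unit_seq (l : seq A) :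
  exists u, forall a, a \in l -> u ** a = a /\ a ** u = a.
Proof.
have [e unit_e] := local_runit_seq l; have [e' unit_e'] := local_lunit_seq l.
exists (circle e e') => a a_l; split.
  by rewrite nmul_circlel unit_e' // subrr nmulr0 addr0.
by rewrite nmulr_circle unit_e // subrr nmul0r addr0.
Qed.

End NuRingTheory.

Section MultiplierTheory.
Variable A : nuRing.
Implicit Types m n : multiplier A.

Lemma multiplier_ext m n : mL m = mL n -> mR m = mR n -> m = n.
Proof.
case: m => L R ? ? ? ? ?; case: n => L' R' ? ? ? ? ? /= eqL eqR; subst L' R'.
by f_equal; apply: proof_irrelevance.
Qed.

Lemma mL_sum (I : Type) m (s : seq I) (F : I -> A) :
  mL m (\sum_(i <- s) F i) = \sum_(i <- s) mL m (F i).
Proof. exact: (big_morph _ (mL_add m) (additive_map0 (mL_add m))). Qed.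

Lemma mR_sum (I : Type) m (s : seq I) (F : I -> A) :
  mR m (\sum_(i <- s) F i) = \sum_(i <- s) mR m (F i).
Proof. exact: (big_morph _ (mR_add m) (additive_map0 (mR_add m))). Qed.

Lemma mmul_mu_r m a : mmul m (mu a) = mu (mL m a).
Proof.
by apply: multiplier_ext; apply: functional_extensionality => x /=;
  rewrite ?mL_mul ?mLR.
Qed.

Lemma mmul_mu_l m a : mmul (mu a) m = mu (mR m a).
Proof.
by apply: multiplier_ext; apply: functional_extensionality => x /=;
  rewrite ?mLR ?mR_mul.
Qed.

End MultiplierTheory.

Section ProductSums.
Variables A B : nuRing.
Implicit Types (g : A -> B) (s : seq (A * B)) (t : seq (B * A)).

Definition lsum g s : B := \sum_(p <- s) g p.1 ** p.2.
Definition rsum g t : B := \sum_(p <- t) p.1 ** g p.2.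

Lemma lsum_cat g s s' : lsum g (s ++ s') = lsum g s + lsum g s'.
Proof. exact: big_cat. Qed.

Lemma rsum_cat g t t' : rsum g (t ++ t') = rsum g t + rsum g t'.
Proof. exact: big_cat. Qed.

Lemma lsum_map_fst (h : A -> A) g s :
  lsum g [seq (h p.1, p.2) | p <- s] = lsum (g \o h) s.
Proof. exact: big_map. Qed.

Lemma rsum_map_snd (h : A -> A) g t :
  rsum g [seq (p.1, h p.2) | p <- t] = rsum (g \o h) t.
Proof. exact: big_map. Qed.

Lemma lsum_nmulr g s b : lsum g s ** b = lsum g [seq (p.1, p.2 ** b) | p <- s].
Proof. by rewrite /lsum big_map nmulr_suml; apply: eq_bigr => p _; rewrite nmulA. Qed.

Lemma rsum_nmull g t b : b ** rsum g t = rsum g [seq (b ** p.1, p.2) | p <- t].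
Proof. by rewrite /rsum big_map nmulr_sumr; apply: eq_bigr => p _; rewrite nmulA. Qed.

End ProductSums.

Section Extension.
Variables (A B : nuRing) (f : A -> B).
Hypotheses (f_rhom : nu_rhom f) (unitsB : has_local_units B).
Implicit Types (m n : multiplier A) (s : seq (A * B)) (t : seq (B * A)).

Lemma lsum_mLR m a s : f a ** lsum (f \o mL m) s = f (mR m a) ** lsum f s.
Proof.
rewrite /lsum !nmulr_sumr; apply: eq_bigr => p _.
by rewrite !nmulA -!f_rhom.2 mLR.
Qed.

Lemma rsum_lsum_mLR m t s :
  rsum f t ** lsum (f \o mL m) s = rsum (f \o mR m) t ** lsum f s.
Proof.
rewrite /rsum !nmulr_suml; apply: eq_bigr => p _.
by rewrite -!nmulA lsum_mLR.
Qed.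

Hypothesis f_nondeg : nondegenerate_hom f.

Lemma lsum_onto b : exists s, lsum f s = b.
Proof. by have [s ->] := f_nondeg.1 b; exists s. Qed.

Lemma rsum_onto b : exists t, rsum f t = b.
Proof. by have [t ->] := f_nondeg.2 b; exists t. Qed.

Lemma lsum_mL_congr m s s' :
  lsum f s = lsum f s' -> lsum (f \o mL m) s = lsum (f \o mL m) s'.
Proof.
move=> eq_ss'; apply: (local_units_eq_lmul unitsB) => c.
by have [t <-] := rsum_onto c; rewrite !rsum_lsum_mLR eq_ss'.
Qed.

Lemma rsum_mR_congr m t t' :
  rsum f t = rsum f t' -> rsum (f \o mR m) t = rsum (f \o mR m) t'.
Proof.
move=> eq_tt'; apply: (local_units_eq_rmul unitsB) => c.
by have [s <-] := lsum_onto c; rewrite -!rsum_lsum_mLR eq_tt'.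
Qed.

Definition lrep b : seq (A * B) :=
  sval (constructive_indefinite_description _ (lsum_onto b)).
Definition rrep b : seq (B * A) :=
  sval (constructive_indefinite_description _ (rsum_onto b)).

Lemma lrepK b : lsum f (lrep b) = b.
Proof. by rewrite /lrep; case: constructive_indefinite_description. Qed.

Lemma rrepK b : rsum f (rrep b) = b.
Proof. by rewrite /rrep; case: constructive_indefinite_description. Qed.

Definition ext_mL m b := lsum (f \o mL m) (lrep b).
Definition ext_mR m b := rsum (f \o mR m) (rrep b).

Lemma ext_mL_lsum m s : ext_mL m (lsum f s) = lsum (f \o mL m) s.
Proof. by apply: lsum_mL_congr; rewrite lrepK. Qed.

Lemma ext_mR_rsum m t : ext_mR m (rsum f t) = rsum (f \o mR m) t.
Proof. by apply: rsum_mR_congr; rewrite rrepK. Qed.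

Lemma ext_mL_add m : {morph ext_mL m : x y / x + y}.
Proof.
move=> x y; have [s <-] := lsum_onto x; have [s' <-] := lsum_onto y.
by rewrite -lsum_cat !ext_mL_lsum lsum_cat.
Qed.

Lemma ext_mR_add m : {morph ext_mR m : x y / x + y}.
Proof.
move=> x y; have [t <-] := rsum_onto x; have [t' <-] := rsum_onto y.
by rewrite -rsum_cat !ext_mR_rsum rsum_cat.
Qed.

Lemma ext_mL_mul m x y : ext_mL m (x ** y) = ext_mL m x ** y.
Proof. by have [s <-] := lsum_onto x; rewrite lsum_nmulr !ext_mL_lsum lsum_nmulr. Qed.

Lemma ext_mR_mul m x y : ext_mR m (x ** y) = x ** ext_mR m y.
Proof. by have [t <-] := rsum_onto y; rewrite rsum_nmull !ext_mR_rsum rsum_nmull. Qed.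

Lemma ext_mLR m x y : x ** ext_mL m y = ext_mR m x ** y.
Proof.
have [t <-] := rsum_onto x; have [s <-] := lsum_onto y.
by rewrite ext_mL_lsum ext_mR_rsum rsum_lsum_mLR.
Qed.

Definition ext_mult m : multiplier B :=
  Multiplier (ext_mL_add m) (ext_mR_add m) (ext_mL_mul m) (ext_mR_mul m) (ext_mLR m).

Lemma ext_mult_rhom : mult_rhom ext_mult.
Proof.
split=> m n; apply: multiplier_ext; apply: functional_extensionality => b /=.
- have [s <-] := lsum_onto b; rewrite !ext_mL_lsum /lsum -big_split.
  by apply: eq_bigr => p _; rewrite /= f_rhom.1 nmulDl.
- have [t <-] := rsum_onto b; rewrite !ext_mR_rsum /rsum -big_split.
  by apply: eq_bigr => p _; rewrite /= f_rhom.1 nmulDr.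
- have [s <-] := lsum_onto b.
  by rewrite !ext_mL_lsum -(lsum_map_fst (mL n)) ext_mL_lsum lsum_map_fst.
- have [t <-] := rsum_onto b.
  by rewrite !ext_mR_rsum -(rsum_map_snd (mR m)) ext_mR_rsum rsum_map_snd.
Qed.

Lemma ext_mult_unital : mult_unital ext_mult.
Proof.
apply: multiplier_ext; apply: functional_extensionality => b /=.
  by have [s <-] := lsum_onto b; rewrite ext_mL_lsum.
by have [t <-] := rsum_onto b; rewrite ext_mR_rsum.
Qed.

Lemma ext_mult_extends : mult_extends f ext_mult.
Proof.
move=> a; apply: multiplier_ext; apply: functional_extensionality => b /=.
  have [s <-] := lsum_onto b; rewrite ext_mL_lsum /lsum nmulr_sumr.
  by apply: eq_bigr => p _; rewrite /= f_rhom.2 nmulA.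
have [t <-] := rsum_onto b; rewrite ext_mR_rsum /rsum nmulr_suml.
by apply: eq_bigr => p _; rewrite /= f_rhom.2 nmulA.
Qed.

Lemma ext_mult_strictly_continuous : strictly_continuous ext_mult.
Proof.
move=> m bs.
exists (flatten [seq [seq p.1 | p <- lrep b] ++ [seq p.2 | p <- rrep b] | b <- bs]).
move=> m' near_m b b_bs; split=> /=.
  apply: eq_big_seq => p p_rep; congr (f _ ** _).
  apply: (near_m _ _).1; apply/flatten_mapP; exists b => //.
  by rewrite mem_cat (map_f fst p_rep).
apply: eq_big_seq => p p_rep; congr (_ ** f _).
apply: (near_m _ _).2; apply/flatten_mapP; exists b => //.
by rewrite mem_cat (map_f snd p_rep) orbT.
Qed.

End Extension.

Lemma nondegenerate_of_extension (A B : nuRing) (f : A -> B)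
    (phi : multiplier A -> multiplier B) :
  has_local_units A -> mult_unital phi -> strictly_continuous phi ->
  mult_extends f phi -> nondegenerate_hom f.
Proof.
move=> unitsA phi1 phi_cont phi_ext.
have local_unit b : exists u, f u ** b = b /\ b ** f u = b.
  have [as_ near_1] := phi_cont (mone A) [:: b].
  have [u unit_u] := local_unit_seq unitsA as_.
  exists u; have := near_1 (mu u) unit_u b (mem_head _ _).
  by rewrite phi_ext phi1.
split=> b; have [u [ub bu]] := local_unit b.
  by exists [:: (u, b)]; rewrite big_seq1.
by exists [:: (b, u)]; rewrite big_seq1.
Qed.

Section Uniqueness.
Variables (A B : nuRing) (f : A -> B) (phi : multiplier A -> multiplier B).
Hypotheses (phiM : {morph phi : m n / mmul m n}) (phi_ext : mult_extends f phi).

Lemma extension_mL m a c : mL (phi m) (f a ** c) = f (mL m a) ** c.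
Proof.
change (mL (mmul (phi m) (mu (f a))) c = f (mL m a) ** c).
by rewrite -phi_ext -phiM mmul_mu_r phi_ext.
Qed.

Lemma extension_mR m a c : mR (phi m) (c ** f a) = c ** f (mR m a).
Proof.
change (mR (mmul (mu (f a)) (phi m)) c = c ** f (mR m a)).
by rewrite -phi_ext -phiM mmul_mu_l phi_ext.
Qed.

End Uniqueness.

Lemma mult_extension_unique (A B : nuRing) (f : A -> B)
    (phi psi : multiplier A -> multiplier B) :
  nondegenerate_hom f ->
  {morph phi : m n / mmul m n} -> mult_extends f phi ->
  {morph psi : m n / mmul m n} -> mult_extends f psi -> phi = psi.
Proof.
move=> [onto_l onto_r] phiM phi_ext psiM psi_ext.
apply: functional_extensionality => m; apply: multiplier_ext;
  apply: functional_extensionality => b.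
  have [s ->] := onto_l b; rewrite !mL_sum; apply: eq_bigr => p _.
  by rewrite (extension_mL phiM phi_ext) (extension_mL psiM psi_ext).
have [t ->] := onto_r b; rewrite !mR_sum; apply: eq_bigr => p _.
by rewrite (extension_mR phiM phi_ext) (extension_mR psiM psi_ext).
Qed.

Theorem mainTheorem11 (A B : nuRing) (f : A -> B) :
  has_local_units A -> has_local_units B -> nu_rhom f ->
  (nondegenerate_hom f <->
   exists phi : multiplier A -> multiplier B,
     mult_rhom phi /\ mult_unital phi /\ strictly_continuous phi /\
     mult_extends f phi) /\
  (nondegenerate_hom f ->
   forall phi psi : multiplier A -> multiplier B,
     mult_rhom phi -> mult_extends f phi ->
     mult_rhom psi -> mult_extends f psi -> phi = psi).
Proof.
move=> unitsA unitsB f_rhom; split; first split.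
- move=> f_nondeg; exists (ext_mult f_rhom unitsB f_nondeg).
  split; first exact: ext_mult_rhom.
  split; first exact: ext_mult_unital.
  by split; [exact: ext_mult_strictly_continuous | exact: ext_mult_extends].
- case=> phi [_ [phi1 [phi_cont phi_ext]]].
  exact: nondegenerate_of_extension unitsA phi1 phi_cont phi_ext.
- move=> f_nondeg phi psi [_ phiM] phi_ext [_ psiM] psi_ext.
  exact: mult_extension_unique f_nondeg phiM phi_ext psiM psi_ext.
Qed.
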